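(* Let $P(x)=\sum_{i=0}^n p_i x^i\in\mathbb{R}[x]$ be a polynomial of degree $n\ge 2$ that is not identically zero. For a point $m\in\mathbb{R}$, a real $\epsilon>0$ and a positive integer $N$, write $m[\epsilon;N]:=\{m+i\epsilon : i=-\lceil N/2\rceil,\dots,\lceil N/2\rceil\}$. Let $\mathbf{m}:=m[\epsilon;n]$ and $\mathbf{M}:=m[\epsilon/2^{\lambda};2^{\lambda}n]$, where $\lambda\ge 2$ is an integer with $\lambda=O(\log n)$. Consider the following randomized procedure: for $\rho=63,127,255,\dots$ (i.e. $\rho_{j+1}=2\rho_j+1$), pick a point $m_j\in\mathbf{M}$ uniformly at random (independently in each iteration), compute (by interval arithmetic) an approximation $\tilde v_j$ of $v_j=P(m_j)$ with $|\tilde v_j-v_j|<2^{-\rho}$, and if $|\tilde v_j|>2^{-\rho+2}$, return $m':=m_j$ (otherwise continue with the next $\rho$). Then, for every integer $k\ge 1$, with probability at least $1-2^{-k(\lambda-1)}$ the procedure returns a point $m'\in\mathbf{M}$ with $P(m')\neq 0$ and $$\log\max\bigl(1,|P(m')|^{-1}\bigr)=2^k\cdot O\Bigl(n\log n+\log\max\bigl(1,(\max_{m_i\in\mathbf{m}}|P(m_i)|)^{-1}\bigr)\Bigr),$$ where the implied constant depends only on the implied constant in $\lambda=O(\log n)$ (logarithms are to base 2).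
   Context: The returned point is called a pseudo-admissible point. The point of the statement is a bound on $-\log|P(m')|$ (equivalently on the working precision $\rho$ at termination) that holds with high probability over the random choices of the procedure. *)

From HB Require Import structures.
From mathcomp Require Import all_boot all_order all_algebra.
From mathcomp Require Import all_classical all_reals.
From mathcomp Require Import ereal sequences exp.
Set Implicit Arguments. Unset Strict Implicit. Unset Printing Implicit Defensive.
Import Order.TTheory GRing.Theory Num.Theory.
Local Open Scope ring_scope.

Definition log2 {R : realType} (x : R) : R := ln x / ln 2.

(* The grid m[eps; N] = { m + i eps : i = -ceil(N/2), ..., ceil(N/2) },
   indexed by i' : 'I_(2*ceil(N/2)+1), with i = i' - ceil(N/2).
   Note uphalf N = ceil(N/2). *)
Definition grid {R : realType} (m eps : R) (N : nat)
  (i : 'I_(2 * uphalf N).+1) : R :=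
  m + ((i : nat)%:R - (uphalf N)%:R) * eps.

(* precision in iteration j (j = 0, 1, ...): 63, 127, 255, ...
   i.e. rho_0 = 63 and rho_{j+1} = 2 rho_j + 1. *)
Definition rho (j : nat) : nat := (2 ^ (j + 6)).-1.

(* acceptance test in iteration j at point x, using approximation oracle
   approx (approx r x approximates P(x) to absolute error < 2^-r) *)
Definition accepts {R : realType} (approx : nat -> R -> R) (j : nat) (x : R)
  : bool :=
  2 ^+ 2 / 2 ^+ rho j < `|approx (rho j) x|.

(* Outcome of the first j+1 random choices s (indices into the grid pt of
   size L): the procedure stops exactly at iteration j (rejects in all
   earlier iterations, accepts at iteration j) and the returned point
   satisfies good. *)
Definition stops_good {R : realType} (approx : nat -> R -> R)
  (good : R -> bool) (L : nat) (pt : 'I_L -> R) (j : nat)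
  (s : {ffun 'I_j.+1 -> 'I_L}) : bool :=
  [&& accepts approx j (pt (s ord_max)), good (pt (s ord_max)) &
      [forall i : 'I_j.+1, ((i : nat) < j)%N ==> ~~ accepts approx i (pt (s i))]].

(* Probability (choices uniform and independent over the L grid points) that
   the procedure returns a point satisfying good: the (extended-real) sum over
   j of the probabilities of the disjoint cylinder events "stops at iteration j
   with a good point". *)
Definition success_prob {R : realType} (approx : nat -> R -> R)
  (good : R -> bool) (L : nat) (pt : 'I_L -> R) : \bar R :=
  (\sum_(0 <= j <oo)
     ((#|[set s : {ffun 'I_j.+1 -> 'I_L} | stops_good approx good pt s]|)%:R
       / (L ^ j.+1)%:R : R)%:E)%E.

Arguments grid {R} m eps N i.
Arguments success_prob {R} approx good L pt.

(* Let B = 2^(lambda+1) n.  The distance from a point of the coarse grid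
   m[eps; n] to a point of the fine grid M = m[eps/2^lambda; 2^lambda n] is at
   most B times the distance between any two distinct fine points, so if P,
   of degree n, were below d at n+1 fine points, Lagrange interpolation would
   give |P| <= (n+1) d B^n on the coarse grid.  Hence, as soon as 2^rho exceeds
   8 (n+1) B^n / max_m |P|, at most n of the at least 2^lambda n fine points
   are rejected, and an iteration fails with probability at most 2^-lambda.
   If j0 is the first such iteration, then rho_(j0) = O(n log n +
   log (1 / max_m |P|)) because rho only doubles per iteration.  All of the
   iterations j0, ..., j0 + k - 1 fail with probability at most
   2^(-k lambda), and a point accepted at an iteration j < j0 + k satisfies
   |P| > 2^(-rho_j), where rho_j < 2^(k-1) (rho_(j0) + 1). *)

From HB Require Import structures.
From mathcomp Require Import all_boot all_order all_algebra.
From mathcomp Require Import all_classical all_reals.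
From mathcomp Require Import ereal sequences exp.
From mathcomp Require Import ring lra zify.
Set Implicit Arguments.
Unset Strict Implicit.
Unset Printing Implicit Defensive.
Import Order.TTheory GRing.Theory Num.Theory.
Local Open Scope ring_scope.

Section Log2.
Variable R : realType.
Implicit Types x y : R.

Lemma ln2_gt0 : 0 < ln (2 : R).
Proof. by rewrite ln_gt0 // ltr1n. Qed.

Lemma log2_2 : log2 (2 : R) = 1.
Proof. by rewrite /log2 divff // gt_eqF // ln2_gt0. Qed.

Lemma log2M x y : 0 < x -> 0 < y -> log2 (x * y) = log2 x + log2 y.
Proof. by move=> x0 y0; rewrite /log2 lnM ?posrE // mulrDl. Qed.

Lemma log2X x k : 0 < x -> log2 (x ^+ k) = k%:R * log2 x.
Proof. by move=> x0; rewrite /log2 lnXn // mulrA mulr_natl. Qed.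

Lemma log2_exp2 k : log2 ((2 : R) ^+ k) = k%:R.
Proof. by rewrite log2X // log2_2 mulr1. Qed.

Lemma ler_log2 x y : 0 < x -> x <= y -> log2 x <= log2 y.
Proof.
move=> x0 xy; rewrite /log2 ler_pM2r ?invr_gt0 ?ln2_gt0 //.
by rewrite ler_ln ?posrE // (lt_le_trans x0).
Qed.

Lemma log2_ge0 x : 1 <= x -> 0 <= log2 x.
Proof. by move=> x1; rewrite /log2 divr_ge0 // ln_ge0 // ler1n. Qed.

End Log2.

Section Oracle.
Variable R : realFieldType.

Lemma norm_gt_of_accepted (a p : R) r : `|a - p| < 1 / 2 ^+ r ->
  2 ^+ 2 / 2 ^+ r < `|a| -> 1 / 2 ^+ r < `|p|.
Proof.
move=> ap a_gt; have e0 : (0 : R) < 1 / 2 ^+ r by rewrite divr_gt0 // exprn_gt0.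
have a_le : `|a| <= `|a - p| + `|p| by rewrite -[X in `|X|](subrK p) ler_normD.
move: a_gt; rewrite -[2 ^+ 2]mulr1 -mulrA -natrX; lra.
Qed.

Lemma norm_lt_of_rejected (a p : R) r : `|a - p| < 1 / 2 ^+ r ->
  ~~ (2 ^+ 2 / 2 ^+ r < `|a|) -> `|p| < 2 ^+ 3 / 2 ^+ r.
Proof.
rewrite -leNgt distrC => pa a_le.
have e0 : (0 : R) < 1 / 2 ^+ r by rewrite divr_gt0 // exprn_gt0.
have p_le : `|p| <= `|p - a| + `|a| by rewrite -[X in `|X|](subrK a) ler_normD.
rewrite -[2 ^+ 3]mulr1 -mulrA -natrX.
by move: a_le; rewrite -[2 ^+ 2]mulr1 -mulrA -natrX; lra.
Qed.

End Oracle.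

Lemma log2_inv_norm_le (R : realType) (p : R) r : 1 / 2 ^+ r < `|p| ->
  p != 0 /\ log2 (Num.max 1 `|p|^-1) <= r%:R.
Proof.
move=> p_gt; have p0 : 0 < `|p|.
  by apply: lt_trans p_gt; rewrite divr_gt0 // exprn_gt0.
split; first by rewrite -normr_gt0.
rewrite -(log2_exp2 R r) ler_log2 ?lt_max ?ltr01 //.
rewrite ge_max exprn_ege1 ?ler1n //=.
by rewrite -[2 ^+ r]invrK lef_pV2 ?posrE ?invr_gt0 ?exprn_gt0 // -div1r ltW.
Qed.

Lemma ler1_dist_nat (R : numDomainType) (a b : nat) :
  a != b -> 1 <= `|a%:R - b%:R : R|.
Proof.
case: (ltngtP a b) => // ab _.
  by rewrite distrC -natrB ?normr_nat ?ler1n ?subn_gt0 // ltnW.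
by rewrite -natrB ?normr_nat ?ler1n ?subn_gt0 // ltnW.
Qed.

Lemma ler_dist_nat_half (R : realDomainType) (i u : nat) : (i <= 2 * u)%N ->
  `|i%:R - u%:R : R| <= u%:R.
Proof.
move=> iu; have : (i%:R : R) <= 2 * u%:R by rewrite -natrM ler_nat.
by have : (0 : R) <= i%:R by []; rewrite ler_norml; lra.
Qed.

Lemma lagrange_norm_le (R : numFieldType) (P : {poly R}) n (x : nat -> R)
    (y B d : R) :
  injective x -> (size P <= n.+1)%N -> 0 <= B ->
  (forall i, (i <= n)%N -> `|P.[x i]| <= d) ->
  (forall i j, (i <= n)%N -> (j <= n)%N -> i != j ->
      `|y - x j| <= B * `|x i - x j|) ->
  `|P.[y]| <= n.+1%:R * d * B ^+ n.
Proof.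
move=> x_inj sP B0 Px_le y_near.
rewrite (lagrange_gen (ltn0Sn n) x_inj sP) horner_sum.
apply: (le_trans (ler_norm_sum _ _ _)).
have -> : n.+1%:R * d * B ^+ n = \sum_(i < n.+1) (d * B ^+ n).
  by rewrite sumr_const card_ord -mulrA mulr_natl.
apply: ler_sum => i _; rewrite (lagrangeE (ltn0Sn n) x_inj).
set p := \prod_(j < n.+1 | j != i) ('X - (x j)%:P).
have px0 : p.[x i] != 0.
  rewrite /p horner_prod; apply/prodf_neq0 => j ji.
  by rewrite hornerXsubC subr_eq0 inj_eq // eq_sym.
have py_le : `|p.[y]| <= B ^+ n * `|p.[x i]|.
  have -> : B ^+ n = \prod_(j < n.+1 | j != i) B.
    by rewrite prodr_const cardC1 card_ord.
  rewrite /p !horner_prod !normr_prod -big_split /=; apply: ler_prod => j ji.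
  rewrite !hornerXsubC normr_ge0 /=.
  by apply: y_near; rewrite 1?eq_sym // -ltnS.
rewrite hornerM hornerC !normrM hornerM hornerC normrM normrV ?unitfE //.
rewrite -/p; apply: ler_pM; rewrite ?mulr_ge0 ?invr_ge0 ?normr_ge0 //.
  exact: (Px_le _ (ltn_ord i)).
by rewrite mulrC ler_pdivrMr ?normr_gt0.
Qed.

Section Grid.
Variable R : realType.
Implicit Types (m h eps d : R) (P : {poly R}).

Definition lattice_pt m h (u z : nat) : R := m + (z%:R - u%:R) * h.

Lemma lattice_ptB m h u a b :
  lattice_pt m h u a - lattice_pt m h u b = (a%:R - b%:R) * h.
Proof. by rewrite /lattice_pt; ring. Qed.

Lemma lattice_pt_inj m h u : h != 0 -> injective (lattice_pt m h u).
Proof.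
move=> h0 a b /eqP; rewrite -subr_eq0 lattice_ptB mulf_eq0 (negPf h0) orbF.
by rewrite subr_eq0 eqr_nat => /eqP.
Qed.

Lemma lattice_pt_dist_ge m h u a b : 0 <= h -> a != b ->
  h <= `|lattice_pt m h u a - lattice_pt m h u b|.
Proof.
move=> h0 ab; rewrite lattice_ptB normrM (ger0_norm h0).
by rewrite ler_peMl // ler1_dist_nat.
Qed.

Lemma dist_grid_fine_le m eps n lam (i : 'I_(2 * uphalf n).+1) b : 0 < eps ->
  (b <= 2 * uphalf (2 ^ lam * n))%N ->
  `|grid m eps n i - lattice_pt m (eps / 2 ^+ lam) (uphalf (2 ^ lam * n)) b|
    <= 2 ^+ lam.+1 * n%:R * (eps / 2 ^+ lam).
Proof.
move=> eps0 bU; set u := uphalf n; set U := uphalf _; set h := eps / _.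
have e0 : (0 : R) < 2 ^+ lam by rewrite exprn_gt0.
have h0 : 0 < h by rewrite divr_gt0.
have -> : grid m eps n i - lattice_pt m h U b =
          ((i%:R - u%:R) * 2 ^+ lam - (b%:R - U%:R)) * h.
  by rewrite /grid /lattice_pt /h; field; rewrite gt_eqF.
rewrite normrM (gtr0_norm h0) ler_pM2r // exprS.
have iu : `|i%:R - u%:R : R| <= n%:R.
  have iu2 : (i <= 2 * u)%N by rewrite -ltnS ltn_ord.
  by apply: le_trans (ler_dist_nat_half R iu2) _; rewrite ler_nat /u; lia.
have bU' : `|b%:R - U%:R : R| <= 2 ^+ lam * n%:R.
  apply: le_trans (ler_dist_nat_half R bU) _.
  by rewrite -natrX -natrM ler_nat /U; lia.
apply: le_trans (ler_normB _ _) _; rewrite normrM (gtr0_norm e0).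
have : `|i%:R - u%:R : R| * 2 ^+ lam <= n%:R * 2 ^+ lam by rewrite ler_pM2r.
lra.
Qed.

(* [lagrange_gen] indexes its nodes injectively by all of [nat], so the n+1
   chosen indices are padded with values beyond [L]. *)
Lemma exists_inj_nat_in_set (L n : nat) (S : {set 'I_L}) : (n < #|S|)%N ->
  exists2 g : nat -> nat, injective g &
    forall j, (j <= n)%N -> exists2 i : 'I_L, i \in S & g j = i.
Proof.
move=> nS; set s := [seq val i | i <- enum S].
have s_uniq : uniq s by rewrite (map_inj_uniq val_inj) enum_uniq.
have ns : (n < size s)%N by rewrite size_map -cardE.
have s_lt z : z \in s -> (z < L)%N by case/mapP => i _ ->; exact: ltn_ord.
have nth_s j : (j <= n)%N -> nth 0%N s j \in s.
  by move=> jn; rewrite mem_nth // (leq_ltn_trans jn ns).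
exists (fun j => if (j <= n)%N then nth 0%N s j else (L + j)%N).
  move=> a b; case: (leqP a n) => an; case: (leqP b n) => bn.
  - move/eqP; rewrite nth_uniq ?(leq_ltn_trans an ns) ?(leq_ltn_trans bn ns) //.
    by move/eqP.
  - by move=> e; have := s_lt _ (nth_s _ an); rewrite e; lia.
  - by move=> e; have := s_lt _ (nth_s _ bn); rewrite -e; lia.
  - by move/addnI.
move=> j jn; rewrite jn; case/mapP: (nth_s _ jn) => i iS ->.
by exists i; rewrite // -mem_enum.
Qed.

Definition grid_max P m eps n : R :=
  \big[Num.max/0]_(i : 'I_(2 * uphalf n).+1) `|P.[grid m eps n i]|.

Lemma grid_max_gt0 P m eps n :
  0 < eps -> size P = n.+1 -> 0 < grid_max P m eps n.
Proof.
move=> eps0 sP; rewrite /grid_max.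
have grid_inj : injective (grid m eps n).
  by move=> i j /(lattice_pt_inj (lt0r_neq0 eps0)) /val_inj.
have max_ge0 : 0 <= grid_max P m eps n.
  exact: le_trans (normr_ge0 P.[grid m eps n ord0]) (le_bigmax _ _ _).
rewrite lt_neqAle max_ge0 andbT eq_sym; apply/eqP => max0.
suff P0 : P = 0 by move: sP; rewrite P0 size_poly0.
apply: (@roots_geq_poly_eq0 _ P [seq grid m eps n i | i <- enum 'I__]).
- apply/allP => _ /mapP[i _ ->]; apply/normr0P/eqP.
  by rewrite eq_le normr_ge0 andbT -max0 le_bigmax.
- by rewrite map_inj_uniq ?enum_uniq.
- by rewrite size_map size_enum_ord sP; lia.
Qed.

Lemma card_small_fine_le P n lam m eps d : 0 < eps -> size P = n.+1 ->
  n.+1%:R * d * (2 ^+ lam.+1 * n%:R) ^+ n < grid_max P m eps n ->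
  (#|[set x | (`|P.[grid m (eps / 2 ^+ lam) (2 ^ lam * n) x]| < d)%R]| <= n)%N.
Proof.
move=> eps0 sP max_gt; rewrite leqNgt.
apply/negP => /exists_inj_nat_in_set[g g_inj gS].
set U := uphalf (2 ^ lam * n); set h := eps / 2 ^+ lam.
have h0 : 0 < h by rewrite divr_gt0 // exprn_gt0.
pose x j := lattice_pt m h U (g j).
have x_inj : injective x by move=> a b /(lattice_pt_inj (lt0r_neq0 h0)) /g_inj.
have gU j : (j <= n)%N -> (g j <= 2 * U)%N.
  by case/gS => i _ ->; rewrite -ltnS ltn_ord.
have Px_le j : (j <= n)%N -> `|P.[x j]| <= d.
  by case/gS => i; rewrite inE /x => /ltW Pi ->.
have d0 : 0 <= d by apply: le_trans (Px_le 0%N isT).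
have B0 : (0 : R) <= 2 ^+ lam.+1 * n%:R by rewrite mulr_ge0 ?exprn_ge0.
move: max_gt; apply/negP; rewrite -leNgt; apply: bigmax_le => [|i _].
  by rewrite !mulr_ge0 ?exprn_ge0.
apply: (lagrange_norm_le x_inj) => //; first by rewrite sP.
move=> a b an bn ab; apply: le_trans (dist_grid_fine_le m i eps0 (gU _ bn)) _.
by rewrite ler_wpM2l // lattice_pt_dist_ge ?(inj_eq g_inj) // ltW.
Qed.

End Grid.

Section Rejection.
Variable R : realType.
Implicit Types (m eps : R) (P : {poly R}) (approx : nat -> R -> R).

(* With d = 2^(3 - rho), the Lagrange bound (n+1) d B^n of
   [card_small_fine_le] is below [grid_max] once
   [threshold n lam (Num.max 1 grid_max^-1) < 2 ^+ rho]. *)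
Definition threshold n lam (M : R) : R :=
  8 * n.+1%:R * (2 ^+ lam.+1 * n%:R) ^+ n * M.

Lemma card_rejected_le P n lam m eps approx j : 0 < eps -> size P = n.+1 ->
  (forall r x, `|approx r x - P.[x]| < 1 / 2 ^+ r) ->
  threshold n lam (Num.max 1 (grid_max P m eps n)^-1) < 2 ^+ rho j ->
  (#|[set x | ~~ accepts approx j (grid m (eps / 2 ^+ lam) (2 ^ lam * n) x)]|
     <= n)%N.
Proof.
move=> eps0 sP approxP T_lt.
apply: leq_trans (card_small_fine_le (d := 2 ^+ 3 / 2 ^+ rho j) eps0 sP _).
  apply/subset_leq_card/fintype.subsetP => x; rewrite !inE.
  exact: norm_lt_of_rejected (approxP _ _).
set M := grid_max P m eps n; set Mx := Num.max 1 M^-1.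
pose K : R := 8 * n.+1%:R * (2 ^+ lam.+1 * n%:R) ^+ n.
have M0 : 0 < M by exact: grid_max_gt0.
have K0 : 0 <= K by rewrite !mulr_ge0 ?exprn_ge0.
have MxM : 1 <= Mx * M.
  by rewrite -[X in X <= _](mulVf (lt0r_neq0 M0)) ler_pM2r // le_max lexx orbT.
have -> : n.+1%:R * (2 ^+ 3 / 2 ^+ rho j) * (2 ^+ lam.+1 * n%:R) ^+ n =
          K / 2 ^+ rho j by rewrite /K -natrX; field; rewrite expf_neq0.
rewrite ltr_pdivrMr ?exprn_gt0 //; apply: le_lt_trans (ler_peMr K0 MxM) _.
by rewrite mulrA [M * _]mulrC ltr_pM2r.
Qed.

Definition reject_rate approx L (pt : 'I_L -> R) i : R :=
  #|[set x | ~~ accepts approx i (pt x)]|%:R / L%:R.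

Lemma reject_rate_ge0_le1 approx L (pt : 'I_L -> R) i :
  0 <= reject_rate approx pt i <= 1.
Proof.
rewrite /reject_rate divr_ge0 //=.
case: L pt => [|L] pt; first by rewrite mulr0n invr0 mulr0.
by rewrite ler_pdivrMr // mul1r ler_nat -[X in (_ <= X)%N]card_ord max_card.
Qed.

Lemma reject_rate_le_exp2 approx L (pt : 'I_L -> R) i n lam :
  (#|[set x | ~~ accepts approx i (pt x)]| <= n)%N -> (2 ^ lam * n <= L)%N ->
  reject_rate approx pt i <= (2 ^+ lam)^-1.
Proof.
case: L pt => [|L] pt rej_n nL.
  by rewrite /reject_rate mulr0n invr0 mulr0 invr_ge0 exprn_ge0.
rewrite /reject_rate ler_pdivrMr // ler_pdivlMl ?exprn_gt0 //.
apply: le_trans (_ : 2 ^+ lam * n%:R <= _).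
  by rewrite ler_wpM2l ?exprn_ge0 // ler_nat.
by rewrite -natrX -natrM ler_nat.
Qed.

End Rejection.

Lemma telescope_first_success (R : comPzRingType) (r : nat -> R) J :
  \sum_(j < J) (1 - r j) * \prod_(i < j) r i = 1 - \prod_(i < J) r i.
Proof.
elim: J => [|J IH]; first by rewrite !big_ord0 subrr.
by rewrite !big_ord_recr /= IH mulrBl mul1r addrA subrK mulrC.
Qed.

Lemma prod_tail_le (R : numDomainType) (r : nat -> R) j0 k a :
  (forall i, 0 <= r i <= 1) -> (forall i, (j0 <= i)%N -> r i <= a) ->
  \prod_(i < j0 + k) r i <= a ^+ k.
Proof.
move=> r01 r_le; have r0 i : 0 <= r i by case/andP: (r01 i).
rewrite -(big_mkord xpredT) (big_cat_nat (leq0n j0) (leq_addr k j0)) /=.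
rewrite -[a ^+ k]mul1r -{2}[k](addKn j0) -prodr_const_nat.
apply: ler_pM; rewrite ?prodr_ge0 ?prodr_ile1 //.
by rewrite !big_nat; apply: ler_prod => i /andP[j0i _]; rewrite r0 r_le.
Qed.

Section Success.
Variable R : realType.
Implicit Types (approx : nat -> R -> R) (good : R -> bool).

Lemma card_stops_good approx good L (pt : 'I_L -> R) j :
  #|[set s : {ffun 'I_j.+1 -> 'I_L} | stops_good approx good pt s]| =
  (#|[set x | accepts approx j (pt x) && good (pt x)]| *
   \prod_(i < j) #|[set x | ~~ accepts approx i (pt x)]|)%N.
Proof.
pose F (i : 'I_j.+1) : pred 'I_L :=
  if i == ord_max then [pred x | accepts approx j (pt x) && good (pt x)]
  else [pred x | ~~ accepts approx i (pt x)].
have -> : [set s : {ffun 'I_j.+1 -> 'I_L} | stops_good approx good pt s]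
          = [set s | s \in family F].
  apply/setP => s; rewrite !inE /stops_good; apply/idP/familyP.
    case/and3P=> acc gd /forallP rej i; rewrite /F.
    case: eqP => [->|ne]; first by rewrite inE acc gd.
    rewrite inE; apply: (implyP (rej i)).
    rewrite ltn_neqAle -ltnS ltn_ord andbT.
    by apply/eqP => ij; apply: ne; apply: val_inj.
  move=> sF; have := sF ord_max; rewrite /F eqxx inE => /andP[-> ->] /=.
  apply/forallP => i; apply/implyP => ij; have := sF i.
  by rewrite /F -val_eqE /= (ltn_eqF ij) inE.
rewrite cardsE card_family foldrE big_map big_enum /=.
rewrite big_ord_recr /= mulnC /F eqxx; congr (_ * _)%N.
  by apply: eq_card => x; rewrite inE.
apply: eq_bigr => i _; rewrite -val_eqE /= (ltn_eqF (ltn_ord i)).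
by apply: eq_card => x; rewrite inE.
Qed.

Lemma stops_good_prob approx good L (pt : 'I_L -> R) j : (0 < L)%N ->
  (forall x, accepts approx j (pt x) -> good (pt x)) ->
  (#|[set s : {ffun 'I_j.+1 -> 'I_L} | stops_good approx good pt s]|%:R
     / (L ^ j.+1)%:R : R) =
  (1 - reject_rate approx pt j) * \prod_(i < j) reject_rate approx pt i.
Proof.
move=> L0 acc_good.
rewrite card_stops_good natrM natr_prod /reject_rate.
rewrite prodf_div prodr_const card_ord.
have -> : #|[set x | accepts approx j (pt x) && good (pt x)]| =
          (L - #|[set x | ~~ accepts approx j (pt x)]|)%N.
  rewrite cardsCs card_ord; congr (_ - _)%N; apply: eq_card => x.
  by rewrite !inE negb_and; case: (boolP (accepts _ _ _)) => //= /acc_good ->.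
have rej_le : (#|[set x | ~~ accepts approx j (pt x)]| <= L)%N.
  by rewrite -[X in (_ <= X)%N]card_ord max_card.
rewrite natrB // natrX exprSr.
by field; rewrite pnatr_eq0 -lt0n L0 expf_neq0 // pnatr_eq0 -lt0n.
Qed.

Lemma success_prob_ge approx good L (pt : 'I_L -> R) j0 k a : (0 < L)%N ->
  (forall j x, (j < j0 + k)%N -> accepts approx j (pt x) -> good (pt x)) ->
  (forall i, (j0 <= i)%N -> reject_rate approx pt i <= a) ->
  ((1 - a ^+ k)%:E <= success_prob approx good L pt)%E.
Proof.
move=> L0 acc_good rate_le.
apply: le_trans (nneseries_lim_ge (j0 + k) _); last first.
  by move=> j _ _; rewrite lee_fin divr_ge0.
rewrite sumEFin lee_fin big_mkord.
rewrite (eq_bigr (fun j : 'I_(j0 + k) => (1 - reject_rate approx pt j) *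
                   \prod_(i < j) reject_rate approx pt i)); last first.
  by move=> j _; apply: stops_good_prob => // x; apply: acc_good.
rewrite telescope_first_success lerD2l lerN2.
by apply: prod_tail_le => // i; exact: reject_rate_ge0_le1.
Qed.

End Success.

Lemma leq_rho : {homo rho : i j / (i <= j)%N}.
Proof.
by move=> i j ij; rewrite /rho -!subn1 leq_sub2r // leq_pexp2l // leq_add2r.
Qed.

Lemma rhoS j : (rho j).+1 = (2 ^ (j + 6))%N.
Proof. by rewrite /rho prednK // expn_gt0. Qed.

Section RhoBounds.
Variable R : realType.

Lemma exists_exp2_rho_gt (T : R) : exists j, T < 2 ^+ rho j.
Proof.
set a := Num.Def.archi_bound (Num.max 0 T); exists a.
have T_lt : T < a%:R.
  by apply: le_lt_trans (archi_boundP _); rewrite ?le_max lexx ?orbT.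
apply: lt_le_trans T_lt _; rewrite -natrX ler_nat.
have a_rho : (a <= rho a)%N.
  by have := rhoS a; have := ltn_expl (a + 6) (ltnSn 1); lia.
exact: ltnW (leq_ltn_trans a_rho (ltn_expl _ (ltnSn 1))).
Qed.

Lemma exp2_first_rho_le (T : R) j0 :
  (forall j, T < 2 ^+ rho j -> (j0 <= j)%N) ->
  (2 : R) ^+ (j0 + 5) <= Num.max 32 (log2 T + 1).
Proof.
case: j0 => [|j] first_j0; first by rewrite add0n le_max -natrX ler_nat.
have T_ge : 2 ^+ rho j <= T.
  by rewrite leNgt; apply/negP => /first_j0; rewrite ltnn.
have rho_le : (rho j)%:R <= log2 T by rewrite -log2_exp2 ler_log2 ?exprn_gt0.
by rewrite le_max -natrX addSn -addnS -rhoS -natr1 lerD2r rho_le orbT.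
Qed.

Lemma rho_le_first_rho (T : R) j0 k j :
  (forall j, T < 2 ^+ rho j -> (j0 <= j)%N) -> (j < j0 + k)%N ->
  (rho j)%:R <= 2 ^+ k * Num.max 32 (log2 T + 1).
Proof.
move=> first_j0 jk; apply: le_trans (ler_wpM2l _ (exp2_first_rho_le first_j0)).
  rewrite -!natrX -natrM ler_nat -expnD.
  apply/ltnW/(@leq_trans (2 ^ (j + 6))); first by rewrite -rhoS.
  by rewrite leq_pexp2l //; lia.
by rewrite exprn_ge0.
Qed.

Lemma log2_threshold n lam (M : R) : (0 < n)%N -> 0 < M ->
  log2 (threshold n lam M) =
    3 + log2 n.+1%:R + n%:R * (lam.+1%:R + log2 n%:R) + log2 M.
Proof.
move=> n0 M0; set B : R := 2 ^+ lam.+1 * n%:R.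
have e3 : (0 : R) < 2 ^+ 3 by rewrite exprn_gt0.
have nS0 : (0 : R) < n.+1%:R by rewrite ltr0Sn.
have n0' : (0 : R) < n%:R by rewrite ltr0n.
have B0 : 0 < B by rewrite mulr_gt0 ?exprn_gt0.
have Bn0 : 0 < B ^+ n by rewrite exprn_gt0.
rewrite /threshold (_ : 8 = 2 ^+ 3); last by rewrite -natrX.
rewrite log2M ?mulr_gt0 // (log2M _ Bn0) ?mulr_gt0 //.
rewrite (log2M e3 nS0) (log2X _ B0).
by rewrite (log2M _ n0') ?exprn_gt0 // !log2_exp2.
Qed.

Lemma log2_threshold_le (c : R) n lam M : 0 < c -> (2 <= n)%N ->
  lam%:R <= c * log2 n%:R -> 1 <= M ->
  Num.max 32 (log2 (threshold n lam M) + 1) <=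
    (c + 16) * (n%:R * log2 n%:R + log2 M).
Proof.
move=> c0 n2 lam_le M1; have n2' : (2 : R) <= n%:R by rewrite ler_nat.
rewrite log2_threshold ?(lt_le_trans ltr01 M1) 1?(leq_trans _ n2) //.
set l := log2 n%:R in lam_le *; set lM := log2 M; set N := n%:R * l.
have l1 : 1 <= l by rewrite -(log2_2 R) ler_log2.
have lM0 : 0 <= lM by exact: log2_ge0.
have l0 : 0 <= l by lra.
have n1 : (1 : R) <= n%:R by lra.
have l_N : l <= N by rewrite ler_peMl.
have n_N : n%:R <= N by rewrite ler_peMr.
have cN0 : 0 <= c * N by apply: mulr_ge0; lra.
have clM0 : 0 <= c * lM by apply: mulr_ge0; lra.
have log2_nS : log2 n.+1%:R <= 1 + l.
  rewrite -[X in _ <= X + _](log2_2 R) -log2M ?ler_log2 ?ltr0Sn //; lra.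
have n_lam : n%:R * (lam.+1%:R + l) <= c * N + n%:R + N.
  have -> : c * N + n%:R + N = n%:R * (c * l + 1 + l) by rewrite /N; ring.
  by rewrite ler_wpM2l // -natr1; lra.
rewrite ge_max; apply/andP; split; lra.
Qed.

End RhoBounds.

Theorem lemma1 (R : realType) (c : R) (hc : 0 < c) :
  exists C : R, 0 < C /\
  forall (n : nat) (P : {poly R}) (m eps : R) (lambda k : nat)
         (approx : nat -> R -> R),
    (2 <= n)%N -> size P = n.+1 ->
    0 < eps ->
    (2 <= lambda)%N -> lambda%:R <= c * log2 (n%:R : R) ->
    (forall (r : nat) (x : R), `|approx r x - P.[x]| < 1 / 2 ^+ r) ->
    (1 <= k)%N ->
    let maxm : R := \big[Num.max/0]_(i : 'I_(2 * uphalf n).+1)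
                  `|P.[grid m eps n i]| in
    let bound := 2 ^+ k * C *
          ((n%:R : R) * log2 (n%:R : R) + log2 (Num.max 1 maxm^-1)) in
    let good := fun x : R =>
          (P.[x] != 0) && (log2 (Num.max 1 `|P.[x]|^-1) <= bound) in
    ((1 - 1 / 2 ^+ (k * (lambda - 1))) %:E <=
      success_prob approx good _
        (grid m (eps / 2 ^+ lambda) (2 ^ lambda * n)))%E.
Proof.
exists (c + 16); split; first lra.
move=> n P m eps lam k approx n2 sP eps0 _ lam_le approxP _.
cbv zeta; set maxm := \big[_/_]_(i < _) _; set Mx := Num.max 1 maxm^-1.
set good := fun x : R => _.
have [j0 T_lt first_j0] := ex_minnP (exists_exp2_rho_gt (threshold n lam Mx)).
have acc_good j x : (j < j0 + k)%N -> accepts approx j x -> good x.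
  move=> jk /(norm_gt_of_accepted (approxP _ _)) /log2_inv_norm_le[Px0 logP].
  rewrite /good Px0 /=; apply: le_trans logP _.
  apply: le_trans (rho_le_first_rho first_j0 jk) _.
  by rewrite -mulrA ler_wpM2l ?exprn_ge0 // log2_threshold_le // le_max lexx.
set pt := grid m (eps / 2 ^+ lam) (2 ^ lam * n).
have rate_le i : (j0 <= i)%N -> reject_rate approx pt i <= (2 ^+ lam)^-1.
  move=> j0i; apply: reject_rate_le_exp2 (card_rejected_le eps0 sP approxP _) _.
    by apply: lt_le_trans T_lt _; rewrite ler_eXn2l ?ltr1n // leq_rho.
  by set N := (2 ^ lam * n)%N; lia.
apply: le_trans (success_prob_ge _ (fun j x => acc_good j _) rate_le) => //.
rewrite lee_fin lerD2l lerN2 exprVn -exprM div1r lef_pV2 ?posrE ?exprn_gt0 //.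
by rewrite ler_eXn2l ?ltr1n //; lia.
Qed.
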